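(* Let $\alpha<_c\beta$ with $\beta/\!\!/\alpha$ an nc border strip with $n$ boxes, and let $w\in CRHW_n$ satisfy $w(\alpha)=\beta$. If $j\in E(\beta/\!\!/\alpha)$, then $j\in\mathrm{leg}(w)$.
   Context: A composition is a finite sequence $\alpha=(\alpha_1,\dots,\alpha_k)$ of positive integers; $\ell(\alpha)=k$; its diagram is the set of boxes $(i,j)$, $1\le i\le\ell(\alpha)$, $1\le j\le\alpha_i$, rows top to bottom, columns left to right. For compositions $\gamma=(\gamma_1,\dots,\gamma_l)$, $\delta$ write $\gamma\lessdot_c\delta$ if $\delta=(1,\gamma_1,\dots,\gamma_l)$ or $\delta=(\gamma_1,\dots,\gamma_k+1,\dots,\gamma_l)$ with $\gamma_i\ne\gamma_k$ for all $i<k$; $<_c$ is the transitive closure. For $\gamma<_c\delta$, $\delta/\!\!/\gamma$ consists of the boxes of $\delta$ other than $(\ell(\delta)-\ell(\gamma)+i,j)$, $1\le i\le\ell(\gamma)$, $1\le j\le\gamma_i$. $\mathrm{supp}(\beta/\!\!/\alpha)$ is the set of columns containing a box of $\beta/\!\!/\alpha$; interval shape: supp is a set of consecutive integers. nc border strip: an interval shape such that (1) if $(i,1),(i,2)\in\beta/\!\!/\alpha$ then $(i,1)$ is the bottommost box of column 1 of $\beta/\!\!/\alpha$, and (2) if $(i,j),(i,j+1)\in\beta/\!\!/\alpha$ with $j\ge2$ then $(i,j)$ is the topmost box of column $j$ of $\beta/\!\!/\alpha$. $E(\beta/\!\!/\alpha)$ is the set of $j$ such that $(i,j),(i,j+1)\in\beta/\!\!/\alpha$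 for some $i$. Box-adding operators: $\mathfrak t_1(\alpha)=(1,\alpha_1,\dots,\alpha_k)$; for $i\ge2$, $\mathfrak t_i(\alpha)$ increases the leftmost part equal to $i-1$ by $1$, and is $0$ if none; $\mathfrak t_i(0)=0$. A word $w=\mathfrak t_{i_1}\cdots\mathfrak t_{i_n}$ acts by $w(\alpha)=\mathfrak t_{i_1}(\cdots\mathfrak t_{i_n}(\alpha))$; it is a reverse $k$-hookword if $i_1\le\cdots\le i_{k+1}>i_{k+2}>\cdots>i_n$, with $\mathrm{leg}(w)=\{i_{k+1},\dots,i_n\}$; connected if $\{i_1,\dots,i_n\}$ is a set of consecutive integers; $CRHW_n$ is the set of connected reverse hookwords of length $n$. *)

From mathcomp Require Import all_boot.
Set Implicit Arguments. Unset Strict Implicit. Unset Printing Implicit Defensive.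

(* A composition is a seq nat with all parts positive. Parts are 1-indexed
   in the paper: alpha_i = nth 0 alpha i.-1. *)
Definition is_composition (a : seq nat) : bool := all (fun x => 0 < x) a.

Definition cover_c (g d : seq nat) : Prop :=
  d = 1 :: g \/
  exists k, k < size g /\ d = set_nth 0 g k (nth 0 g k).+1 /\
            (forall i, i < k -> nth 0 g i <> nth 0 g k).

Inductive lt_c : seq nat -> seq nat -> Prop :=
| lt_c_step g d : cover_c g d -> lt_c g d
| lt_c_trans g d e : lt_c g d -> lt_c d e -> lt_c g e.

Definition in_skew (d g : seq nat) (i j : nat) : bool :=
  let l := size d - size g in
  [&& 1 <= i, i <= size d, 1 <= j, j <= nth 0 d i.-1 &
      ~~ ((l < i) && (j <= nth 0 g (i - l).-1))].

Definition in_supp (d g : seq nat) (j : nat) : bool :=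
  has (fun i => in_skew d g i j) (iota 1 (size d)).

Definition interval_shape (d g : seq nat) : Prop :=
  forall j1 j2 j3, j1 <= j2 -> j2 <= j3 ->
    in_supp d g j1 -> in_supp d g j3 -> in_supp d g j2.

Definition nc_border_strip (d g : seq nat) : Prop :=
  interval_shape d g /\
  (forall i, in_skew d g i 1 -> in_skew d g i 2 ->
     forall i', in_skew d g i' 1 -> i' <= i) /\
  (forall i j, 2 <= j -> in_skew d g i j -> in_skew d g i j.+1 ->
     forall i', in_skew d g i' j -> i <= i').

Definition skew_size (d g : seq nat) : nat :=
  sumn [seq count (fun j => in_skew d g i j) (iota 1 (nth 0 d i.-1))
       | i <- iota 1 (size d)].

Definition in_E (d g : seq nat) (j : nat) : Prop :=
  exists i, in_skew d g i j /\ in_skew d g i j.+1.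

(* box-adding operators; None plays the role of 0 *)
Definition t_op (i : nat) (a : seq nat) : option (seq nat) :=
  match i with
  | 0 => None
  | 1 => Some (1 :: a)
  | i'.+1 => let k := index i' a in
             if k < size a then Some (set_nth 0 a k i'.+1) else None
  end.

(* word w = t_{i_1} ... t_{i_n} represented as [:: i_1; ...; i_n];
   w(alpha) = t_{i_1}( ... t_{i_n}(alpha)) *)
Definition word_act (w : seq nat) (a : seq nat) : option (seq nat) :=
  foldr (fun i acc => obind (t_op i) acc) (Some a) w.

(* w is a reverse k-hookword: i_1 <= ... <= i_{k+1} > i_{k+2} > ... > i_n
   (0-indexed: positions 0..k weakly increasing, positions k..n-1 strictly
   decreasing); leg(w) = {i_{k+1},...,i_n} = drop k w *)
Definition rev_hookword (k : nat) (w : seq nat) : Prop :=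
  k < size w /\ all (fun i => 0 < i) w /\
  (forall a, a < k -> nth 0 w a <= nth 0 w a.+1) /\
  (forall a, k <= a -> a.+1 < size w -> nth 0 w a.+1 < nth 0 w a).

Definition leg (k : nat) (w : seq nat) : seq nat := drop k w.

Definition connected_word (w : seq nat) : Prop :=
  forall x y z, x <= y -> y <= z -> x \in w -> z \in w -> y \in w.

From mathcomp Require Import all_boot.
From mathcomp Require Import zify.
Set Implicit Arguments. Unset Strict Implicit.

(* Let the box (i, j), (i, j+1) witness j in E(beta // alpha): row i of alpha
   stops before column j and row i of beta reaches column j+1. Split
   w = arm ++ leg. The leg acts first; a letter t_x only turns a row of
   length x-1 into one of length x, so if j is not a letter of the leg the
   row stays shorter than j. The arm is weakly increasing, so it lengthens
   each row by at most one box, and the row cannot reach column j+1. *)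

(* Rows are indexed from the bottom: t_1 adds a new top row, so the s-th row
   from the bottom is the same row before and after every operator. *)
Definition rpart (a : seq nat) (s : nat) : nat := nth 0 (rev a) s.

Lemma t_op_rpart x a b : t_op x a = Some b ->
  0 < x /\ exists r, [/\ rpart a r = x.-1, rpart b r = x &
                        forall s, s != r -> rpart b s = rpart a s].
Proof.
case: x => [|[|x]] //=.
- case=> <-; split=> //; exists (size a); rewrite /rpart rev_cons.
  rewrite nth_rcons size_rev ltnn eqxx nth_default ?size_rev //; split=> // s ne.
  rewrite nth_rcons size_rev (negbTE ne).
  by case: ifP => // Hs; rewrite nth_default // size_rev; lia.
- case: ifP => // Hk [<-]; split=> //.
  set k := index x.+1 a in Hk *.
  have Hs : size (set_nth 0 a k x.+2) = size a by rewrite size_set_nth; lia.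
  exists (size a - k.+1); rewrite /rpart !nth_rev ?Hs; try lia.
  have -> : size a - (size a - k.+1).+1 = k by lia.
  rewrite nth_set_nth /= eqxx nth_index -?index_mem //; split=> // s ne.
  have [s_lt|s_ge] := ltnP s (size a); last by rewrite !nth_default ?size_rev ?Hs.
  rewrite !nth_rev ?Hs // nth_set_nth /=.
  by case: ifP => // /eqP E; move/eqP: ne; lia.
Qed.

Lemma word_act_cat u v a :
  word_act (u ++ v) a = obind (word_act u) (word_act v a).
Proof.
rewrite /word_act foldr_cat; case: (foldr _ _ v) => //=.
by elim: u => //= x u ->.
Qed.

Lemma size_word_act w a b : word_act w a = Some b -> size a <= size b.
Proof.
elim: w b => [|x w IH] b /=; first by case=> ->.
case E: (word_act w a) => [c|] //= Ht; apply: leq_trans (IH _ E) _.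
move: Ht; case: x => [|[|x]] //=; first by case=> <-.
by case: ifP => // _ [<-]; rewrite size_set_nth; lia.
Qed.

Lemma rpart_lt_word_act j v a c s : j \notin v -> word_act v a = Some c ->
  rpart a s < j -> rpart c s < j.
Proof.
elim: v c => [|x v IH] c /=; first by move=> _ [->].
rewrite in_cons negb_or => /andP [/eqP x_neq_j j_notin_v].
case E: (word_act v a) => [c'|] //= Ht lt_j.
have [_ [r [Hr Hr' Hother]]] := t_op_rpart Ht.
have := IH c' j_notin_v E lt_j.
by have [->|ne] := eqVneq s r; [rewrite Hr Hr'; lia | rewrite Hother].
Qed.

Lemma rpart_sorted_word_act u c b s : sorted leq u -> word_act u c = Some b ->
  rpart b s = rpart c s \/ rpart b s = (rpart c s).+1 /\ rpart b s \in u.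
Proof.
elim: u b => [|x u IH] b /=; first by move=> _ [->]; left.
move=> u_sorted; case E: (word_act u c) => [b'|] //= Ht.
have [x_gt0 [r [Hr Hr' Hother]]] := t_op_rpart Ht.
have x_le_u : all (leq x) u := order_path_min leq_trans u_sorted.
move: (IH b' (path_sorted u_sorted) E).
have [->|ne] := eqVneq s r; last first.
  rewrite Hother // => -[->|[-> Hin]]; first by left.
  by right; split=> //; rewrite in_cons Hin orbT.
rewrite Hr' => -[Heq|[Heq Hin]].
- by right; split; [lia | rewrite in_cons eqxx].
- by have := allP x_le_u _ Hin; rewrite Hr; lia.
Qed.

Lemma in_skew_rpart d g i j : size g <= size d -> in_skew d g i j ->
  j <= rpart d (size d - i) /\ rpart g (size d - i) < j.
Proof.
move=> size_le /and5P [i_gt0 i_le j_gt0 j_le not_in_g]; rewrite /rpart.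
split; first by rewrite nth_rev; [have -> : size d - (size d - i).+1 = i.-1 by lia | lia].
have [s_lt|s_ge] := ltnP (size d - i) (size g); last by rewrite nth_default ?size_rev; lia.
move: not_in_g; have -> : size d - size g < i by lia.
rewrite /= -ltnNge nth_rev //.
by have -> : size g - (size d - i).+1 = (i - (size d - size g)).-1 by lia.
Qed.

Lemma sorted_take_rev_hookword k w : rev_hookword k w -> sorted leq (take k w).
Proof.
move=> [k_lt [_ [arm_inc _]]]; apply/(sortedP 0) => a; rewrite size_take k_lt => a_lt.
by rewrite !nth_take ?arm_inc //; lia.
Qed.

Theorem mainTheorem12 (n : nat) (alpha beta : seq nat) (k : nat) (w : seq nat) (j : nat) :
  is_composition alpha ->
  lt_c alpha beta ->
  nc_border_strip beta alpha ->
  skew_size beta alpha = n ->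
  size w = n -> rev_hookword k w -> connected_word w ->
  word_act w alpha = Some beta ->
  in_E beta alpha j ->
  j \in leg k w.
Proof.
move=> _ _ _ _ _ hook _ act [i [box_j box_j1]]; apply/idPn => j_notin_leg.
have size_le := size_word_act act.
move: act; rewrite -(cat_take_drop k w) word_act_cat.
case leg_act: (word_act (drop k w) alpha) => [g|] //= arm_act.
have [_ alpha_lt_j] := in_skew_rpart size_le box_j.
have [beta_gt_j _] := in_skew_rpart size_le box_j1.
have g_lt_j := rpart_lt_word_act j_notin_leg leg_act alpha_lt_j.
have := rpart_sorted_word_act (size beta - i) (sorted_take_rev_hookword hook) arm_act.
lia.
Qed.
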